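(* Consider the upstream-downstream model described in the context, with $e_\rightarrow>e_\leftarrow$, and satisfying the fixation assumption. Let $d_\uparrow$ and $d_\downarrow$ be the death rates of each upstream and each downstream site, respectively. Then the overall fixation probability satisfies $\rho>1/N$, and consequently the molecular clock rate satisfies $K>u$, if and only if $d_\uparrow>d_\downarrow$.
   Context: General framework: $N$ sites, each occupied by an individual of type M or R; a replacement event is a pair $(R,\alpha)$ with $R\subseteq\{1,\ldots,N\}$, $\alpha:R\to\{1,\ldots,N\}$; a state-independent replacement rule $p(R,\alpha)$ drives the Markov chain where at each step an event is drawn and $s_i'=s_i$ for $i\notin R$, $s_i'=s_{\alpha(i)}$ for $i\in R$. Fixation assumption: there exist a site $i$ and a finite sequence of positive-probability events which, occurring consecutively, make every site carry the type initially at $i$. Define $e_{ij}=\sum_{(R,\alpha):\,j\in R,\,\alpha(j)=i}p(R,\alpha)$, $d_i=\sum_j e_{ji}$, $B=\sum_{i,j}e_{ij}$; $\rho_i$ is the probability that the chain started with M at site $i$ only is absorbed in all-M; $\rho=\frac1B\sum_i d_i\rho_i$; $K=Nu\rho$ for a mutation probability $u>0$. Upstream-downstream model: the sites are partitioned into $N_\uparrow\ge1$ upstream and $N_\downarrow\ge1$ downstream sites, $N=N_\uparrow+N_\downarrow$, with nonnegative constants $e_\uparrow,e_\downarrow,e_\rightarrow,e_\leftarrow$ such that $e_{ij}=e_\uparrow$ if $i,j$ are both upstream, $e_{ij}=e_\downarrow$ if both downstream, $e_{ij}=e_\rightarrow$ if $i$ is upstream and $j$ downstream, and $e_{ij}=e_\leftarrow$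 if $i$ is downstream and $j$ upstream. Then all upstream sites share a common death rate $d_\uparrow$ and all downstream sites a common death rate $d_\downarrow$, and $B=N_\uparrow d_\uparrow+N_\downarrow d_\downarrow$. *)

From HB Require Import structures.
From mathcomp Require Import all_boot all_order all_algebra.
From mathcomp Require Import boolp classical_sets reals topology normedtype sequences.
Set Implicit Arguments. Unset Strict Implicit. Unset Printing Implicit Defensive.
Import Order.TTheory GRing.Theory Num.Theory.
Local Open Scope ring_scope.

Section Model.
Variables (R : realType) (N : nat).

(* A replacement event (R, alpha): the set R of replaced sites and the parent
   map alpha (only its values on R matter). *)
Definition event := ({set 'I_N} * {ffun 'I_N -> 'I_N})%type.

(* A state: true = type M, false = type R. *)
Definition state := {ffun 'I_N -> bool}.

Definition apply_event (ev : event) (s : state) : state :=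
  [ffun j => if j \in ev.1 then s (ev.2 j) else s j].

Definition is_replacement_rule (p : event -> R) : Prop :=
  (forall ev, 0 <= p ev) /\ \sum_(ev : event) p ev = 1.

Definition fixation_assumption (p : event -> R) : Prop :=
  exists (i : 'I_N) (evs : seq event),
    all (fun ev => 0 < p ev) evs /\
    forall (s : state) (j : 'I_N),
      foldl (fun s ev => apply_event ev s) s evs j = s i.

(* e_ij : expected offspring of i transferred to j *)
Definition e_coef (p : event -> R) (i j : 'I_N) : R :=
  \sum_(ev : event | (j \in ev.1) && (ev.2 j == i)) p ev.

Definition death (p : event -> R) (i : 'I_N) : R := \sum_(j : 'I_N) e_coef p j i.

Definition Btot (p : event -> R) : R := \sum_(i : 'I_N) \sum_(j : 'I_N) e_coef p i j.

Definition trans (p : event -> R) (s s' : state) : R :=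
  \sum_(ev : event | apply_event ev s == s') p ev.

Fixpoint distr (p : event -> R) (s0 : state) (t : nat) (s : state) : R :=
  match t with
  | O => (s == s0)%:R
  | t'.+1 => \sum_(s' : state) distr p s0 t' s' * trans p s' s
  end.

Definition allM : state := [ffun _ => true].
Definition singleM (i : 'I_N) : state := [ffun j => j == i].

(* rho_i: probability that the chain started with M at site i only is absorbed
   in all-M (all-M is absorbing, so this is lim_t P(X_t = all-M)). *)
Definition rho_i (p : event -> R) (i : 'I_N) : R :=
  limn (fun t : nat => (distr p (singleM i) t allM : R^o)).

Definition rho (p : event -> R) : R :=
  (\sum_(i : 'I_N) death p i * rho_i p i) / Btot p.

Definition Kclock (p : event -> R) (u : R) : R := N%:R * u * rho p.

Definition upstream_downstream (p : event -> R) (up : {set 'I_N})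
    (eu ed er el : R) : Prop :=
  forall i j : 'I_N,
    e_coef p i j =
      if i \in up then (if j \in up then eu else er)
      else (if j \in up then el else ed).

End Model.

(* The weighted count s |-> \sum_k pi_k s_k is a martingale of the chain as soon as the
   weights satisfy the detailed balance pi_k e_ik = pi_i e_ki; by the fixation assumption
   the chain reaches a monochromatic state geometrically fast, so optional stopping gives
   rho_i = pi_i / \sum_k pi_k.  In the upstream-downstream model pi is e_-> upstream and
   e_<- downstream, and a direct computation gives
   rho - 1/N = N_up N_down (e_-> - e_<-) (d_up - d_down) / (N (\sum_k pi_k) B). *)
From HB Require Import structures.
From mathcomp Require Import all_boot all_order all_algebra.
From mathcomp Require Import boolp classical_sets reals topology normedtype sequences.
From mathcomp Require Import ring lra.
Import Order.TTheory GRing.Theory Num.Theory.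
Local Open Scope ring_scope.
Set Implicit Arguments. Unset Strict Implicit.

Lemma sum_if_in_set (R : pzRingType) (n : nat) (A : {set 'I_n}) (a b : R) :
  \sum_(k : 'I_n) (if k \in A then a else b) = #|A|%:R * a + #|~: A|%:R * b.
Proof.
rewrite (bigID (mem A)) /= !mulr_natl -!sumr_const.
congr (_ + _); first by apply: eq_bigr => k ->.
by apply: eq_big => [k|k /negbTE ->]; rewrite ?inE.
Qed.

Lemma exists_expr_lt (R : realType) (x e : R) :
  0 <= x < 1 -> 0 < e -> exists k : nat, x ^+ k < e.
Proof.
move=> /andP[x_ge0 x_lt1] e_gt0.
have := @cvg_expr R x; rewrite ger0_norm // => /(_ x_lt1) x_cvg0.
have [k _ Hk] := (@cvgrPdist_lt _ R^o _ _ _ (fun n : nat => x ^+ n) 0).1 x_cvg0 e e_gt0.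
by exists k; have := Hk k (leqnn k); rewrite sub0r normrN ger0_norm // exprn_ge0.
Qed.

Lemma nondecreasing_limn_eq (R : realType) (a : nat -> R) (c : R) :
  {homo a : n m / (n <= m)%N >-> n <= m} -> (forall t, a t <= c) ->
  (forall e, 0 < e -> exists t, c - e <= a t) ->
  limn (fun t => (a t : R^o)) = c.
Proof.
move=> a_nd a_le a_close.
have a_cvg : cvgn (fun t => (a t : R^o)).
  by apply: nondecreasing_is_cvgn => //; exists c => _ [t _ <-].
apply/eqP; rewrite eq_le; apply/andP; split.
  by apply: limr_le => //; apply: nearW.
rewrite leNgt; apply/negP => lim_lt.
have [t Ht] := a_close ((c - limn (fun t => (a t : R^o))) / 2) ltac:(lra).
have := nondecreasing_cvgn_le a_nd a_cvg t; lra.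
Qed.

Section TransitionOperator.
Variables (R : realType) (N : nat) (p : event N -> R).
Hypothesis p_ge0 : forall ev, 0 <= p ev.
Hypothesis p_sum1 : \sum_(ev : event N) p ev = 1.

Definition transop (g : state N -> R) (s : state N) : R :=
  \sum_(ev : event N) p ev * g (apply_event ev s).

Definition expect (s0 : state N) (t : nat) (g : state N -> R) : R :=
  \sum_(s : state N) distr p s0 t s * g s.

Lemma sum_trans_mul (g : state N -> R) s' :
  \sum_(s : state N) trans p s' s * g s = transop g s'.
Proof.
rewrite /transop /trans.
under eq_bigr => s _ do rewrite big_distrl /=.
rewrite (exchange_big_dep predT) //=; apply: eq_bigr => ev _.
by rewrite (big_pred1 (apply_event ev s')) // => s; rewrite /= eq_sym.
Qed.

Lemma distr_ge0 s0 t s : 0 <= distr p s0 t s.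
Proof.
elim: t s => [|t IH] s /=; first by rewrite ler0n.
by apply: sumr_ge0 => s' _; rewrite mulr_ge0 ?sumr_ge0.
Qed.

Lemma expect0 s0 g : expect s0 0 g = g s0.
Proof.
rewrite /expect (bigD1 s0) //= eqxx mul1r big1 ?addr0 // => s /negbTE ->.
by rewrite mul0r.
Qed.

Lemma expect_pred1 s0 t s : expect s0 t (fun x => (x == s)%:R) = distr p s0 t s.
Proof.
rewrite /expect (bigD1 s) //= eqxx mulr1 big1 ?addr0 // => x /negbTE ->.
by rewrite mulr0.
Qed.

Lemma expectS s0 t g : expect s0 t.+1 g = expect s0 t (transop g).
Proof.
rewrite /expect /=.
under eq_bigr => s _ do rewrite big_distrl /=.
rewrite exchange_big /=; apply: eq_bigr => s' _.
by rewrite -sum_trans_mul big_distrr /=; apply: eq_bigr => s _; rewrite mulrA.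
Qed.

Lemma expect_addn s0 t k g : expect s0 (t + k) g = expect s0 t (iter k transop g).
Proof. by elim: k g => [|k IH] g; rewrite ?addn0 // addnS expectS IH iterSr. Qed.

Lemma le_expect s0 t f g : (forall s, f s <= g s) -> expect s0 t f <= expect s0 t g.
Proof. by move=> fg; apply: ler_sum => s _; rewrite ler_wpM2l ?distr_ge0. Qed.

Lemma expectZ s0 t c f : expect s0 t (fun s => c * f s) = c * expect s0 t f.
Proof. by rewrite /expect big_distrr; apply: eq_bigr => s _; rewrite mulrCA. Qed.

Lemma expectD s0 t f g :
  expect s0 t (fun s => f s + g s) = expect s0 t f + expect s0 t g.
Proof. by rewrite /expect -big_split; apply: eq_bigr => s _; rewrite mulrDr. Qed.

Lemma transop_ge0 f : (forall s, 0 <= f s) -> forall s, 0 <= transop f s.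
Proof. by move=> f_ge0 s; apply: sumr_ge0 => ev _; rewrite mulr_ge0. Qed.

Lemma iter_transop_ge0 k f : (forall s, 0 <= f s) -> forall s, 0 <= iter k transop f s.
Proof. by elim: k => [|k IH] //= f_ge0; apply/transop_ge0/IH. Qed.

Lemma iter_transopD k f g s :
  iter k transop (fun x => f x + g x) s = iter k transop f s + iter k transop g s.
Proof.
elim: k s => [|k IH] s //=.
by rewrite /transop -big_split; apply: eq_bigr => ev _; rewrite IH mulrDr.
Qed.

Lemma iter_transop_cst k c s : iter k transop (fun _ => c) s = c.
Proof.
elim: k s => [|k IH] s //=.
rewrite /transop; under eq_bigr => ev _ do rewrite IH.
by rewrite -big_distrl /= p_sum1 mul1r.
Qed.

Lemma iter_transop_id k f : transop f =1 f -> iter k transop f = f.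
Proof. by move=> f_fix; elim: k => [|k IH] //=; rewrite IH; apply: funext. Qed.

Lemma iter_transop_ge_path evs f s : (forall x, 0 <= f x) ->
  \prod_(ev <- evs) p ev * f (foldl (fun s ev => apply_event ev s) s evs)
    <= iter (size evs) transop f s.
Proof.
move=> f_ge0; elim: evs s => [|ev evs IH] s /=; first by rewrite big_nil mul1r.
rewrite big_cons -mulrA /transop (bigD1 ev) //= -[X in X <= _]addr0.
apply: lerD; first by apply: ler_wpM2l => //; exact: IH.
by apply: sumr_ge0 => ev' _; rewrite mulr_ge0 ?iter_transop_ge0.
Qed.

Definition monochrome (s : state N) : bool :=
  (s == allM N) || (s == [ffun _ => false]).

Lemma apply_event_monochrome ev s : monochrome s -> apply_event ev s = s.
Proof.
by case/orP => /eqP ->; apply/ffunP => j; rewrite !ffunE; case: ifP; rewrite ?ffunE.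
Qed.

Lemma transop_monochrome f s : monochrome s -> transop f s = f s.
Proof.
move=> s_mono; rewrite /transop.
under eq_bigr => ev _ do rewrite apply_event_monochrome //.
by rewrite -big_distrl /= p_sum1 mul1r.
Qed.

Lemma iter_transop_monochrome k f s : monochrome s -> iter k transop f s = f s.
Proof. by move=> s_mono; elim: k => [|k IH] //=; rewrite transop_monochrome. Qed.

Definition unfixed (s : state N) : R := (~~ monochrome s)%:R.

Section Fixation.
Variables (i0 : 'I_N) (evs : seq (event N)).
Hypothesis evs_gt0 : all (fun ev => 0 < p ev) evs.
Hypothesis evs_fix : forall (s : state N) (j : 'I_N),
  foldl (fun s ev => apply_event ev s) s evs j = s i0.

Let q := \prod_(ev <- evs) p ev.

Lemma path_prob_gt0 : 0 < q.
Proof.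
rewrite /q; elim: evs evs_gt0 => [|ev e IH] /=; first by rewrite big_nil.
by move=> /andP[ev_gt0 e_gt0]; rewrite big_cons mulr_gt0 // IH.
Qed.

Lemma path_prob_le1 : q <= 1.
Proof.
apply: prodr_ile1 => ev _; rewrite p_ge0 -p_sum1 (bigD1 ev) //= lerDl.
exact: sumr_ge0.
Qed.

Lemma iter_transop_unfixed s :
  iter (size evs) transop unfixed s <= (1 - q) * unfixed s.
Proof.
case s_mono: (monochrome s).
  by rewrite iter_transop_monochrome // /unfixed s_mono mulr0.
pose fixed x : R := (monochrome x)%:R.
have fold_mono : monochrome (foldl (fun s ev => apply_event ev s) s evs).
  have -> : foldl (fun s ev => apply_event ev s) s evs = [ffun _ => s i0].
    by apply/ffunP => j; rewrite evs_fix ffunE.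
  by rewrite /monochrome; case: (s i0); rewrite eqxx ?orbT.
have unfixed_fixed : (fun x => unfixed x + fixed x) = fun _ => 1.
  apply: funext => x; rewrite /unfixed /fixed.
  by case: (monochrome x); rewrite ?add0r ?addr0.
have sum1 : iter (size evs) transop unfixed s + iter (size evs) transop fixed s = 1.
  by rewrite -iter_transopD unfixed_fixed iter_transop_cst.
have := iter_transop_ge_path evs s (f := fixed) (fun x => ler0n _ _).
rewrite /fixed fold_mono mulr1 /unfixed s_mono /= mulr1 -/q; lra.
Qed.

Lemma expect_unfixed_decay s0 k : expect s0 (k * size evs) unfixed <= (1 - q) ^+ k.
Proof.
elim: k => [|k IH]; first by rewrite mul0n expect0 expr0 /unfixed; case: (monochrome s0).
rewrite mulSn addnC expect_addn exprS.
apply: le_trans (le_expect _ _ iter_transop_unfixed) _.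
by rewrite expectZ ler_wpM2l // subr_ge0 path_prob_le1.
Qed.

End Fixation.
End TransitionOperator.

Section Martingale.
Variables (R : realType) (N : nat) (p : event N -> R).
Hypothesis p_sum1 : \sum_(ev : event N) p ev = 1.
Variable pi : 'I_N -> R.
Hypothesis detailed_balance : forall i k, pi k * e_coef p i k = pi i * e_coef p k i.

Definition mass (s : state N) : R := \sum_(k : 'I_N) pi k * (s k)%:R.

Lemma mass_apply_event ev s : mass (apply_event ev s) - mass s =
  \sum_(k : 'I_N | k \in ev.1) pi k * ((s (ev.2 k))%:R - (s k)%:R).
Proof.
rewrite /mass -sumrB [RHS]big_mkcond /=; apply: eq_bigr => k _.
by rewrite ffunE; case: ifP => _; rewrite ?mulrBr ?subrr.
Qed.

Lemma sum_replacing_events (f : 'I_N -> R) k :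
  \sum_(ev : event N | k \in ev.1) p ev * f (ev.2 k) = \sum_(i : 'I_N) e_coef p i k * f i.
Proof.
rewrite (partition_big (fun ev : event N => ev.2 k) predT) //=.
apply: eq_bigr => i _; rewrite /e_coef big_distrl /=.
by apply: eq_bigr => ev /andP[_ /eqP ->].
Qed.

Lemma detailed_balance_flux (x : 'I_N -> R) :
  \sum_(k : 'I_N) \sum_(i : 'I_N) e_coef p i k * (pi k * (x i - x k)) = 0.
Proof.
under eq_bigr => k _ do under eq_bigr => i _ do
  rewrite mulrCA mulrA detailed_balance mulrBr.
under eq_bigr => k _ do rewrite sumrB.
rewrite sumrB exchange_big /=; apply/eqP; rewrite subr_eq0; apply/eqP.
by apply: eq_bigr => i _; apply: eq_bigr => k _; rewrite detailed_balance.
Qed.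

Lemma transop_mass s : transop p mass s = mass s.
Proof.
apply/eqP; rewrite -subr_eq0.
have -> : transop p mass s - mass s =
    \sum_(ev : event N) p ev * (mass (apply_event ev s) - mass s).
  by rewrite [RHS](eq_bigr _ (fun ev _ => mulrBr _ _ _)) sumrB -big_distrl /= p_sum1 mul1r.
under eq_bigr => ev _ do rewrite mass_apply_event big_distrr big_mkcond /=.
rewrite exchange_big /=.
under eq_bigr => k _ do rewrite -big_mkcond /=.
have flux k :
    \sum_(ev : event N | k \in ev.1) p ev * (pi k * ((s (ev.2 k))%:R - (s k)%:R)) =
    \sum_(i : 'I_N) e_coef p i k * (pi k * ((s i)%:R - (s k)%:R)).
  exact: (sum_replacing_events (fun i => pi k * ((s i)%:R - (s k)%:R))).
under eq_bigr => k _ do rewrite flux.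
by rewrite (detailed_balance_flux (fun i => (s i)%:R)).
Qed.

End Martingale.

Section AbsorptionProbability.
Variables (R : realType) (N : nat) (p : event N -> R).
Hypothesis p_ge0 : forall ev, 0 <= p ev.
Hypothesis p_sum1 : \sum_(ev : event N) p ev = 1.
Hypothesis fixation : fixation_assumption p.
Variable pi : 'I_N -> R.
Hypothesis detailed_balance : forall i k, pi k * e_coef p i k = pi i * e_coef p k i.
Hypothesis pi_ge0 : forall k, 0 <= pi k.
Hypothesis mass_allM_gt0 : 0 < mass pi (allM N).

Let Pi : R := mass pi (allM N).

Lemma mass_singleM i : mass pi (singleM i) = pi i.
Proof.
rewrite /mass (bigD1 i) //= ffunE eqxx mulr1 big1 ?addr0 // => k /negbTE k_neq.
by rewrite ffunE k_neq mulr0.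
Qed.

Lemma expect_mass s0 t : expect p s0 t (mass pi) = mass pi s0.
Proof.
by rewrite -[t]add0n expect_addn expect0 iter_transop_id // => s; exact: transop_mass.
Qed.

Lemma distr_allM_nondecreasing s0 :
  {homo (fun t => distr p s0 t (allM N)) : n m / (n <= m)%N >-> n <= m}.
Proof.
move=> n m /subnK <-; elim: (m - n)%N => [|k IH] //; apply: le_trans IH _.
rewrite addSn -!expect_pred1 expectS; apply: le_expect => // s.
case: eqP => [->|_]; first by rewrite transop_monochrome // /monochrome eqxx.
by apply: transop_ge0 => // x; case: (_ == _).
Qed.

(* [mass pi] lies between [Pi] times the indicator of all-M and [Pi] times that of
   all-M or unfixed; take expectations and use the martingale property. *)
Lemma mass_bounds s0 t :
  Pi * distr p s0 t (allM N) <= mass pi s0 <=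
  Pi * (distr p s0 t (allM N) + expect p s0 t (@unfixed R N)).
Proof.
rewrite -expect_pred1 -expectD -!expectZ -(expect_mass s0 t).
apply/andP; split; apply: le_expect => // s; rewrite /unfixed /monochrome.
  case: eqP => [->|_]; first by rewrite mulr1.
  by rewrite mulr0; apply: sumr_ge0 => k _; rewrite mulr_ge0.
case: eqP => [->|_] /=; first by rewrite addr0 mulr1.
case: eqP => [->|_] /=.
  by rewrite add0r mulr0 /mass big1 // => k _; rewrite ffunE mulr0.
rewrite add0r mulr1 /Pi /mass; apply: ler_sum => k _; rewrite ffunE mulr1.
by apply: ler_piMr => //; case: (s k); rewrite ?ler0n.
Qed.

Lemma rho_iE i : rho_i p i = pi i / Pi.
Proof.
have [i0 [evs [evs_gt0 evs_fix]]] := fixation.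
rewrite -(mass_singleM i); apply: nondecreasing_limn_eq.
- exact: distr_allM_nondecreasing.
- by move=> t; rewrite ler_pdivlMr // mulrC; case/andP: (mass_bounds (singleM i) t).
move=> e e_gt0.
set q := \prod_(ev <- evs) p ev.
have q_gt0 : 0 < q := path_prob_gt0 evs_gt0.
have q_le1 : q <= 1 := path_prob_le1 p_ge0 p_sum1 evs.
have [k Hk] := exists_expr_lt (x := 1 - q) ltac:(apply/andP; split; lra) e_gt0.
exists (k * size evs)%N.
have := expect_unfixed_decay p_ge0 p_sum1 evs_fix (singleM i) k.
case/andP: (mass_bounds (singleM i) (k * size evs)).
rewrite -ler_pdivrMl // mulrC -/q.
set a := distr _ _ _ _; set u := expect _ _ _ _ => _ upper decay; lra.
Qed.

End AbsorptionProbability.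

Lemma Kclock_gt_iff (R : realType) (N : nat) (p : event N -> R) (u : R) :
  (0 < N)%N -> 0 < u -> (u < Kclock p u) = (1 / N%:R < rho p).
Proof.
move=> N_gt0 u_gt0; have Nr_gt0 : 0 < N%:R :> R by rewrite ltr0n.
by rewrite /Kclock mulrAC ltr_pMl // ltr_pdivrMr // mulrC.
Qed.

Section UpstreamDownstream.
Variables (R : realType) (N : nat) (p : event N -> R).
Hypothesis p_ge0 : forall ev, 0 <= p ev.
Hypothesis p_sum1 : \sum_(ev : event N) p ev = 1.
Hypothesis fixation : fixation_assumption p.
Variables (up : {set 'I_N}) (eu ed er el : R).
Hypothesis up_downE : upstream_downstream p up eu ed er el.
Hypotheses (up_gt0 : (0 < #|up|)%N) (down_gt0 : (0 < #|~: up|)%N).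
Hypotheses (eu_ge0 : 0 <= eu) (ed_ge0 : 0 <= ed) (el_ge0 : 0 <= el) (el_lt_er : el < er).

Local Notation nU := (#|up|%:R : R).
Local Notation nD := (#|~: up|%:R : R).
Local Notation dU := (nU * eu + nD * el).
Local Notation dD := (nU * er + nD * ed).
Local Notation Pi := (nU * er + nD * el).
Local Notation B := (nU * dU + nD * dD).

Definition up_down_weight (k : 'I_N) : R := if k \in up then er else el.

Lemma death_up_down k : death p k = if k \in up then dU else dD.
Proof.
rewrite /death; under eq_bigr => l _ do rewrite up_downE.
by case: (k \in up); rewrite sum_if_in_set.
Qed.

Lemma Btot_up_down : Btot p = B.
Proof.
rewrite /Btot exchange_big /= -sum_if_in_set.
by apply: eq_bigr => k _; rewrite -death_up_down.
Qed.

Lemma mass_up_down : mass up_down_weight (allM N) = Pi.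
Proof.
by rewrite /mass -sum_if_in_set; apply: eq_bigr => k _; rewrite ffunE mulr1.
Qed.

Lemma detailed_balance_up_down i k :
  up_down_weight k * e_coef p i k = up_down_weight i * e_coef p k i.
Proof.
by rewrite !up_downE /up_down_weight; case: (i \in up); case: (k \in up); rewrite mulrC.
Qed.

Let nU_gt0 : 0 < nU. Proof. by rewrite ltr0n. Qed.
Let nD_gt0 : 0 < nD. Proof. by rewrite ltr0n. Qed.
Let er_gt0 : 0 < er. Proof. exact: le_lt_trans el_lt_er. Qed.
Let Pi_gt0 : 0 < Pi. Proof. by rewrite ltr_wpDr ?mulr_ge0 ?mulr_gt0 ?ler0n. Qed.
Let dD_gt0 : 0 < dD. Proof. by rewrite ltr_wpDr ?mulr_ge0 ?mulr_gt0 ?ler0n. Qed.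
Let B_gt0 : 0 < B.
Proof. by rewrite ltr_wpDl ?mulr_ge0 ?mulr_gt0 ?addr_ge0 ?mulr_ge0 ?ler0n. Qed.

Lemma rho_up_down : rho p = (nU * dU * er + nD * dD * el) / (Pi * B).
Proof.
have weight_ge0 k : 0 <= up_down_weight k.
  by rewrite /up_down_weight; case: (k \in up) => //; exact: ltW.
have mass_gt0 : 0 < mass up_down_weight (allM N) by rewrite mass_up_down.
rewrite /rho Btot_up_down.
under eq_bigr => k _ do rewrite (rho_iE p_ge0 p_sum1 fixation detailed_balance_up_down
  weight_ge0 mass_gt0) mass_up_down death_up_down.
rewrite (eq_bigr (fun k => if k \in up then dU * er / Pi else dD * el / Pi)); last first.
  by move=> k _; rewrite /up_down_weight; case: (k \in up); rewrite mulrA.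
by rewrite sum_if_in_set; field; rewrite !gt_eqF.
Qed.

Lemma rho_sub_inv_up_down :
  rho p - 1 / N%:R = nU * nD * (er - el) * (dU - dD) / ((nU + nD) * Pi * B).
Proof.
have -> : N%:R = nU + nD :> R by rewrite -natrD cardsC card_ord.
by rewrite rho_up_down; field; rewrite !gt_eqF // addr_gt0.
Qed.

Lemma rho_gt_inv_up_down : (1 / N%:R < rho p) = (dD < dU).
Proof.
have num_gt0 : 0 < nU * nD * (er - el) by rewrite !mulr_gt0 // subr_gt0.
have den_gt0 : 0 < (nU + nD) * Pi * B by rewrite !mulr_gt0 // addr_gt0.
by rewrite -subr_gt0 rho_sub_inv_up_down pmulr_lgt0 ?invr_gt0 // pmulr_rgt0 // subr_gt0.
Qed.

End UpstreamDownstream.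

Theorem mainTheorem8 (R : realType) (N : nat) (p : event N -> R)
    (up : {set 'I_N}) (eu ed er el : R) :
  is_replacement_rule p ->
  fixation_assumption p ->
  (0 < #|up|)%N -> (0 < #|~: up|)%N ->
  0 <= eu -> 0 <= ed -> 0 <= er -> 0 <= el ->
  upstream_downstream p up eu ed er el ->
  el < er ->
  forall i j : 'I_N, i \in up -> j \notin up ->
    (1 / N%:R < rho p <-> death p j < death p i) /\
    (forall u : R, 0 < u -> (u < Kclock p u <-> death p j < death p i)).
Proof.
move=> [p_ge0 p_sum1] fixation up_gt0 down_gt0 eu_ge0 ed_ge0 _ el_ge0 up_downE el_lt_er
  i j i_up j_down.
have N_gt0 : (0 < N)%N by rewrite -(card_ord N) -(cardsC up) addn_gt0 up_gt0.
have rho_gt := rho_gt_inv_up_down p_ge0 p_sum1 fixation up_downE up_gt0 down_gt0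
  eu_ge0 ed_ge0 el_ge0 el_lt_er.
rewrite !(death_up_down up_downE) i_up (negbTE j_down) -rho_gt.
by split=> // u u_gt0; rewrite Kclock_gt_iff.
Qed.
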